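(* Let $K$ be a non-Archimedean locally compact field of characteristic $p>0$ with group of 1-units $U=1+M_K$. Let $f:U\to U$ be a locally analytic group endomorphism, and suppose there is a power series $\sum_{n\ge0}a_nx^n\in 1+xK[[x]]$ with $f(1+x)=\sum_{n=0}^\infty a_nx^n$ for all $x\in M_K$. Then $a_n\in\mathbb{F}_p$ for all $n\ge0$.
   Context: $M_K$ is the maximal ideal of the ring of integers $R_K$ of $K$; with constant field $\mathbb{F}$ of order $q$ and uniformizer $\pi$, $K=\mathbb{F}((\pi))$, $U=1+\pi\mathbb{F}[[\pi]]$, and $|x|=q^{-v(x)}$. A continuous function $f$ on a ball $B_{\alpha,t}=\{u\in R_K:|u-\alpha|\le t\}$, $t=|\rho|$, is analytic there if $f(u)=\sum_{n\ge0}c_n\left(\frac{u-\alpha}{\rho}\right)^n$ with $c_n\in K$, $c_n\to0$; $f:U\to K$ is locally analytic if each $\alpha\in U$ has a ball $B_{\alpha,t_\alpha}\subset U$, $t_\alpha>0$, on which $f$ is analytic. $\mathbb{F}_p$ denotes the prime subfield of $K$. *)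

From HB Require Import structures.
From mathcomp Require Import all_boot all_order all_algebra.
From mathcomp Require Import reals.
Set Implicit Arguments. Unset Strict Implicit. Unset Printing Implicit Defensive.
Import Order.TTheory GRing.Theory Num.Theory.
Local Open Scope ring_scope.

Section Defs.
Variables (K : fieldType) (R : realType) (abs : K -> R).

Definition ultrametric_abs : Prop :=
  [/\ forall x, 0 <= abs x,
      forall x, abs x = 0 <-> x = 0,
      forall x y, abs (x * y) = abs x * abs y &
      forall x y, abs (x + y) <= Num.max (abs x) (abs y)].

Definition abs_cvg (u : nat -> K) (l : K) : Prop :=
  forall e : R, 0 < e -> exists N : nat, forall n, (N <= n)%N -> abs (u n - l) < e.

Definition series_to (s : nat -> K) (l : K) : Prop :=
  abs_cvg (fun n => \sum_(i < n) s i) l.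

(* (K, abs) is a non-discrete locally compact non-Archimedean valued field:
   abs is a nontrivial ultrametric absolute value and the closed unit ball
   R_K is (sequentially) compact. *)
Definition nonarch_local_field : Prop :=
  [/\ ultrametric_abs,
      exists pi : K, 0 < abs pi < 1 &
      forall u : nat -> K, (forall n, abs (u n) <= 1) ->
        exists (phi : nat -> nat) (l : K),
          (forall n, (phi n < phi n.+1)%N) /\ abs_cvg (fun n => u (phi n)) l].

Definition in_RK (x : K) : Prop := abs x <= 1.
Definition in_MK (x : K) : Prop := abs x < 1.
Definition in_U (x : K) : Prop := in_MK (x - 1).

Definition in_ball (alpha : K) (t : R) (u : K) : Prop :=
  in_RK u /\ abs (u - alpha) <= t.

Definition analytic_on_ball (f : K -> K) (alpha rho : K) : Prop :=
  exists c : nat -> K,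
    (forall e : R, 0 < e -> exists N : nat, forall n, (N <= n)%N -> abs (c n) < e) /\
    forall u, in_ball alpha (abs rho) u ->
      series_to (fun n => c n * ((u - alpha) / rho) ^+ n) (f u).

Definition locally_analytic_U (f : K -> K) : Prop :=
  forall alpha, in_U alpha ->
    exists rho : K, rho != 0 /\
      (forall u, in_ball alpha (abs rho) u -> in_U u) /\
      analytic_on_ball f alpha rho.

Definition U_endomorphism (f : K -> K) : Prop :=
  (forall u, in_U u -> in_U (f u)) /\
  (forall u v, in_U u -> in_U v -> f (u * v) = f u * f v).

End Defs.

(* Put b_n := a_n - a_n^p.  In characteristic p the Frobenius x |-> x^p is
   additive and continuous, and f is multiplicative on U, so
   f(1 + x^p) = f((1 + x)^p) = f(1 + x)^p; subtracting the Frobenius image of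
   the series of f(1 + x) from the series of f(1 + x^p) gives
   sum_n b_n (x^p)^n = 0 for every x in M_K.  With x = pi^(k+1) this is a power
   series vanishing at every power z^(k+1) of z = pi^p, and the ultrametric
   inequality forces all its coefficients to vanish: the lowest nonzero term
   would dominate the whole sum for k large.  Hence a_n^p = a_n, and the roots
   of X^p - X are exactly the elements of F_p. *)

From HB Require Import structures.
From mathcomp Require Import all_boot all_order all_algebra.
From mathcomp Require Import reals ring.
From mathcomp Require Import classical_sets topology normedtype sequences.
Import Order.TTheory GRing.Theory Num.Theory numFieldNormedType.Exports.
Local Open Scope ring_scope.
Set Implicit Arguments. Unset Strict Implicit. Unset Printing Implicit Defensive.

Lemma le0_of_le_geometric (R : realType) (c B s : R) :
  0 <= s -> s < 1 -> (forall j, c <= B * s ^+ j) -> c <= 0.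
Proof.
move=> s_ge0 s_lt1 le_cB; rewrite leNgt; apply/negP => c_gt0.
have B_gt0 : 0 < B.
  by have := le_cB 0%N; rewrite expr0 mulr1; apply: lt_le_trans.
have /cvgr0_norm_lt/(_ (c / B)) :
    ((GRing.exp s : R ^nat) @ \oo --> (0 : R))%classic.
  by apply: cvg_expr; rewrite ger0_norm.
case=> [|N _ /(_ N (leqnn N))]; first by rewrite divr_gt0.
rewrite /= ger0_norm ?exprn_ge0 // ltr_pdivlMr // mulrC.
by rewrite ltNge le_cB.
Qed.

Lemma natr_inj_ltn_pchar (R : nzRingType) (p i j : nat) :
  p \in [pchar R] -> (i < p)%N -> (j < p)%N -> i%:R = j%:R :> R -> i = j.
Proof.
move=> hc; wlog le_ij : i j / (i <= j)%N => [W hi hj eq_ij|hi hj eq_ij].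
  by case: (leqP i j) => [|/ltnW] /W; [apply | move=> /(_ hj hi (esym eq_ij))].
apply/eqP; rewrite eqn_leq le_ij /= -subn_eq0.
have : (p %| j - i)%N by rewrite (dvdn_pcharf hc) natrB // eq_ij subrr.
have : (j - i < p)%N by apply: leq_ltn_trans hj; rewrite leq_subr.
case: (j - i)%N => // d lt_dp.
by rewrite gtnNdvd.
Qed.

Lemma pFrobenius_fixed_natr (R : idomainType) (p : nat) (x : R) :
  p \in [pchar R] -> x ^+ p = x -> exists k : nat, x = k%:R.
Proof.
move=> hc fix_x; have p_gt1 := prime_gt1 (pcharf_prime hc).
have [|x_notin] := boolP (x \in [seq i%:R | i <- iota 0 p]).
  by case/mapP=> i _ ->; exists i.
pose P : {poly R} := 'X^p - 'X.
have size_P : size P = p.+1.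
  by rewrite size_polyDl ?size_polyXn // size_polyN size_polyX ltnS.
have P_neq0 : P != 0 by rewrite -size_poly_eq0 size_P.
have rootP_natr i : root P i%:R.
  by rewrite /root !hornerE -(pFrobenius_autE hc) pFrobenius_aut_nat subrr.
suff : (size (x :: [seq i%:R | i <- iota 0 p]) < size P)%N.
  by rewrite size_P /= size_map size_iota ltnn.
apply: max_poly_roots P_neq0 _ _.
  rewrite /= /root !hornerE fix_x subrr eqxx /=.
  by apply/allP => _ /mapP [i _ ->]; apply: rootP_natr.
rewrite /= x_notin map_inj_in_uniq ?iota_uniq // => i j.
by rewrite !mem_iota !add0n; apply: natr_inj_ltn_pchar hc.
Qed.

Section Ultrametric.
Variables (K : fieldType) (R : realType) (abs : K -> R).
Hypothesis habs : ultrametric_abs abs.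

Lemma abs_ge0 x : 0 <= abs x. Proof. by case: habs. Qed.
Lemma abs_eq0 x : abs x = 0 <-> x = 0. Proof. by case: habs. Qed.
Lemma absM x y : abs (x * y) = abs x * abs y. Proof. by case: habs. Qed.
Lemma absD_le_max x y : abs (x + y) <= Num.max (abs x) (abs y).
Proof. by case: habs. Qed.

Lemma abs0 : abs 0 = 0. Proof. exact/abs_eq0. Qed.

Lemma abs1 : abs 1 = 1.
Proof.
have abs1_neq0 : abs 1 != 0 by apply/eqP => /abs_eq0/eqP; rewrite oner_eq0.
by apply: (mulfI abs1_neq0); rewrite -absM !mulr1.
Qed.

Lemma absX x n : abs (x ^+ n) = abs x ^+ n.
Proof. by elim: n => [|n IH]; rewrite ?abs1 // !exprS absM IH. Qed.

Lemma absN x : abs (- x) = abs x.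
Proof.
suff absN1 : abs (-1) = 1 by rewrite -mulN1r absM absN1 mul1r.
have /eqP : abs (-1) ^+ 2 = 1 by rewrite -absX sqrrN expr1n abs1.
rewrite sqrf_eq1 => /orP [/eqP //|/eqP absN1].
by have := abs_ge0 (-1); rewrite absN1 ler0N1.
Qed.

Lemma absB_le_max x y : abs (x - y) <= Num.max (abs x) (abs y).
Proof. by rewrite -(absN y) absD_le_max. Qed.

Lemma abs_sum_le (I : Type) (r : seq I) (P : pred I) (c : I -> K) (M : R) :
  0 <= M -> (forall i, P i -> abs (c i) <= M) ->
  abs (\sum_(i <- r | P i) c i) <= M.
Proof.
move=> M_ge0 le_cM; apply: (big_ind (fun z => abs z <= M)); rewrite ?abs0 //.
by move=> x y hx hy; apply: le_trans (absD_le_max x y) _; rewrite ge_max hx hy.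
Qed.

Lemma eq_abs_cvg u v l : (forall n, u n = v n) ->
  abs_cvg abs u l -> abs_cvg abs v l.
Proof.
by move=> eq_uv cvg_u e /cvg_u [N hN]; exists N => n; rewrite -eq_uv; apply: hN.
Qed.

Lemma abs_cvgB u v l1 l2 : abs_cvg abs u l1 -> abs_cvg abs v l2 ->
  abs_cvg abs (fun n => u n - v n) (l1 - l2).
Proof.
move=> cvg_u cvg_v e e_gt0.
have [[N1 hN1] [N2 hN2]] := (cvg_u e e_gt0, cvg_v e e_gt0).
exists (maxn N1 N2) => n; rewrite geq_max => /andP [n_geN1 n_geN2].
rewrite (_ : _ - _ = (u n - l1) - (v n - l2)); last by ring.
by apply: le_lt_trans (absB_le_max _ _) _; rewrite gt_max hN1 ?hN2.
Qed.

Lemma abs_cvg_pFrobenius p u l : p \in [pchar K] -> abs_cvg abs u l ->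
  abs_cvg abs (fun n => u n ^+ p) (l ^+ p).
Proof.
move=> hc cvg_u e e_gt0; have p_gt0 := prime_gt0 (pcharf_prime hc).
have min_gt0 : 0 < Num.min e 1 by rewrite lt_min e_gt0 ltr01.
have [N hN] := cvg_u _ min_gt0.
exists N => n /hN; rewrite lt_min => /andP [lt_e lt_1].
have -> : u n ^+ p - l ^+ p = (u n - l) ^+ p.
  by rewrite -!(pFrobenius_autE hc) rmorphB.
rewrite absX.
by apply: le_lt_trans lt_e; rewrite ler_iXnr ?abs_ge0 ?ltW.
Qed.

Lemma series_to_terms_cvg0 c l : series_to abs c l -> abs_cvg abs c 0.
Proof.
move=> cvg_c e e_gt0; have [N hN] := cvg_c e e_gt0.
exists N => n n_geN; rewrite subr0.
have -> : c n = (\sum_(i < n.+1) c i - l) - (\sum_(i < n) c i - l).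
  by rewrite big_ord_recr /=; ring.
apply: le_lt_trans (absB_le_max _ _) _.
by rewrite gt_max !hN // (leq_trans n_geN).
Qed.

Lemma abs_cvg0_bounded c :
  abs_cvg abs c 0 -> exists B, forall n, abs (c n) <= B.
Proof.
move=> /(_ 1 ltr01) [N hN].
exists (\big[Num.max/1]_(i < N) abs (c i)) => n.
have [lt_nN|le_Nn] := ltnP n N.
  exact: (le_bigmax _ (fun i : 'I_N => abs (c i)) (Ordinal lt_nN)).
apply: le_trans (bigmax_ge_id _ _ _ _).
by have := hN n le_Nn; rewrite subr0 => /ltW.
Qed.

Lemma in_U_mul u v : in_U abs u -> in_U abs v -> in_U abs (u * v).
Proof.
rewrite /in_U /in_MK => hu hv.
have abs_v_le1 : abs v <= 1.
  rewrite -(subrK 1 v); apply: le_trans (absD_le_max _ _) _.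
  by rewrite abs1 ge_max lexx ltW.
rewrite (_ : u * v - 1 = (u - 1) * v + (v - 1)); last by ring.
apply: le_lt_trans (absD_le_max _ _) _; rewrite gt_max hv andbT absM.
by apply: le_lt_trans hu; rewrite ler_piMr ?abs_ge0.
Qed.

Lemma in_U_expr u n : in_U abs u -> in_U abs (u ^+ n).
Proof.
move=> hu; elim: n => [|n IH]; last by rewrite exprS; apply: in_U_mul.
by rewrite /in_U /in_MK expr0 subrr abs0 ltr01.
Qed.

Lemma in_MK_expr x n : (0 < n)%N -> in_MK abs x -> in_MK abs (x ^+ n).
Proof. by move=> n_gt0; rewrite /in_MK absX expr_lt1 ?abs_ge0. Qed.

Lemma U_endomorphism_exprS f u n : U_endomorphism abs f -> in_U abs u ->
  f (u ^+ n.+1) = f u ^+ n.+1.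
Proof.
move=> [_ f_mul] hu; elim: n => [|n IH]; first by rewrite !expr1.
by rewrite exprS f_mul // ?IH -?exprS //; apply: in_U_expr.
Qed.

Lemma series_pFrobenius_defect p f a x :
  p \in [pchar K] -> U_endomorphism abs f ->
  (forall x, in_MK abs x ->
     series_to abs (fun n => a n * x ^+ n) (f (1 + x))) ->
  in_MK abs x -> series_to abs (fun n => (a n - a n ^+ p) * (x ^+ p) ^+ n) 0.
Proof.
move=> hc hf hser hx; have p_gt0 := prime_gt0 (pcharf_prime hc).
have f_pFrobenius : f (1 + x ^+ p) = f (1 + x) ^+ p.
  rewrite (_ : 1 + x ^+ p = (1 + x) ^+ p); last first.
    by rewrite -!(pFrobenius_autE hc) rmorphD rmorph1.
  by rewrite -(prednK p_gt0) U_endomorphism_exprS // /in_U addrC addKr.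
have := abs_cvgB (hser _ (in_MK_expr p_gt0 hx))
                 (abs_cvg_pFrobenius hc (hser _ hx)).
rewrite f_pFrobenius subrr; apply: eq_abs_cvg => n.
rewrite -[(\sum_(i < n) _) ^+ p](pFrobenius_autE hc) rmorph_sum -sumrB.
apply: eq_bigr => i _.
by rewrite /= pFrobenius_autE mulrBl exprMn -!exprM mulnC.
Qed.

Lemma abs_lowest_coef_le b z m k B :
  0 < abs z -> abs z <= 1 ->
  (forall i, (i < m)%N -> b i = 0) -> (forall i, abs (b i * z ^+ i) <= B) ->
  series_to abs (fun n => b n * (z ^+ k.+1) ^+ n) 0 ->
  abs (b m) * abs z ^+ m <= B * abs z ^+ k.
Proof.
move=> z_gt0 z_le1 b_lt_m le_B cvg0.
(* Every other nonzero term of the series at z^(k+1) has index > m, hence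
   absolute value at most B s^(k(m+1)); if the m-th term were larger, it would
   dominate all late partial sums, which tend to 0. *)
set s := abs z; set w := s ^+ (k * m).
have s_ge0 : 0 <= s := abs_ge0 z.
have w_gt0 : 0 < w by rewrite exprn_gt0.
have M_ge0 : 0 <= B * s ^+ k * w.
  have B_ge0 : 0 <= B by apply: le_trans (le_B 0%N); rewrite abs_ge0.
  by apply/mulr_ge0/ltW => //; apply/mulr_ge0/exprn_ge0/ltW.
have abs_term i :
    abs (b i * (z ^+ k.+1) ^+ i) = abs (b i * z ^+ i) * s ^+ (k * i).
  by rewrite !absM !absX -!exprM mulSn exprD mulrA.
rewrite leNgt; apply/negP => lt_Bm.
set e := abs (b m * (z ^+ k.+1) ^+ m).
have lt_Me : B * s ^+ k * w < e by rewrite /e abs_term absM absX ltr_pM2r.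
have [N hN] := cvg0 e (le_lt_trans M_ge0 lt_Me).
pose n := maxn N m.+1; have lt_mn : (m < n)%N by rewrite leq_maxr.
have := hN n (leq_maxl _ _); rewrite subr0 (bigD1 (Ordinal lt_mn)) //=.
set T := \sum_(i < n | _) _ => lt_Se.
have le_TM : abs T <= B * s ^+ k * w.
  apply: abs_sum_le => // i ne_im.
  have [lt_im|lt_mi|eq_im] := ltngtP i m.
  - by rewrite b_lt_m // mul0r abs0.
  - rewrite abs_term -mulrA -exprD -mulnS.
    apply: ler_pM; rewrite ?abs_ge0 ?exprn_ge0 //.
    exact: ler_wiXn2l s_ge0 z_le1 _ _ (leq_mul (leqnn k) lt_mi).
  - by case/eqP: ne_im; apply: val_inj.
have := absB_le_max (b m * (z ^+ k.+1) ^+ m + T) T; rewrite addrK -/e le_max.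
case/orP => [/(lt_le_trans lt_Se)|/le_trans/(_ le_TM)]; first by rewrite ltxx.
by rewrite leNgt lt_Me.
Qed.

Lemma power_series_eq0_at_powers b z : 0 < abs z < 1 ->
  (forall k, series_to abs (fun n => b n * (z ^+ k.+1) ^+ n) 0) ->
  forall n, b n = 0.
Proof.
move=> /andP [z_gt0 z_lt1] b_series.
have [B le_B] : exists B, forall i, abs (b i * z ^+ i) <= B.
  have [B le_B] := abs_cvg0_bounded (series_to_terms_cvg0 (b_series 0%N)).
  by exists B => i; have := le_B i; rewrite expr1.
elim/ltn_ind => m b_lt_m; apply/abs_eq0/eqP; rewrite eq_le abs_ge0 andbT.
apply: (le0_of_le_geometric (B := B) (abs_ge0 z) z_lt1) => j.
have := abs_lowest_coef_le z_gt0 (ltW z_lt1) b_lt_m le_B (b_series (m + j)%N).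
by rewrite exprD [_ ^+ m * _]mulrC mulrA ler_pM2r ?exprn_gt0.
Qed.

End Ultrametric.

Theorem lemma2p1 (K : fieldType) (R : realType) (abs : K -> R) (p : nat)
    (hK : nonarch_local_field abs)
    (hp : prime p) (hchar : (p%:R : K) = 0)
    (f : K -> K)
    (hf_end : U_endomorphism abs f)
    (hf_an : locally_analytic_U abs f)
    (a : nat -> K) (ha0 : a 0%N = 1)
    (hser : forall x : K, in_MK abs x ->
              series_to abs (fun n => a n * x ^+ n) (f (1 + x))) :
  forall n : nat, exists k : nat, a n = k%:R.
Proof.
have [habs [pi /andP [pi_gt0 pi_lt1]] _] := hK.
have hc : p \in [pchar K] by apply/andP; split; [|apply/eqP].
have p_gt0 := prime_gt0 hp.
have a_pFrobenius_fixed : forall n, a n - a n ^+ p = 0.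
  apply: (power_series_eq0_at_powers habs (z := pi ^+ p)).
    by rewrite absX // exprn_gt0 //= expr_lt1 ?abs_ge0.
  move=> k; rewrite -exprM mulnC exprM.
  exact: (series_pFrobenius_defect habs hc hf_end hser
           (in_MK_expr habs _ pi_lt1)).
move=> n; apply: (pFrobenius_fixed_natr hc).
by apply/eqP; rewrite eq_sym -subr_eq0 a_pFrobenius_fixed.
Qed.
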